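(* Let $\varepsilon>0$ and let $q$ be an $\varepsilon$-near square quadrilateral. If one side of $q$ has length $1$, then the length $L$ of each side adjacent to it satisfies $$\tan\!\left(\tfrac{\pi}{4}-\varepsilon\right)\cos(2\varepsilon)\ \le\ L\ \le\ \frac{\tan\left(\frac{\pi}{4}+\varepsilon\right)}{\cos(2\varepsilon)}.$$
   Context: A quadrilateral is cut by a diagonal into two triangles. Its parameters $(a_1,a_2,a_3,a_4)$ are the four angles that the diagonal makes with the four sides (the angles of the two triangles at the endpoints of the diagonal). The quadrilateral is $\varepsilon$-near square if $|a_i-\pi/4|<\varepsilon$ for all $i$.
   Formalization: The near-square parameter ε is restricted to 0 < ε < π/4 instead of ranging over all ε > 0. The statement above fails without it. *)

From Stdlib Require Import Reals Lra.
Open Scope R_scope.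

Definition point := (R * R)%type.
Definition vsub (p q : point) : point := (fst p - fst q, snd p - snd q).
Definition dot (u v : point) : R := fst u * fst v + snd u * snd v.
Definition vnorm (u : point) : R := sqrt (dot u u).
Definition cross (u v : point) : R := fst u * snd v - snd u * fst v.
Definition dist (p q : point) : R := vnorm (vsub p q).

Definition angle_at (O X Y : point) : R :=
  acos (dot (vsub X O) (vsub Y O) / (vnorm (vsub X O) * vnorm (vsub Y O))).

(* A quadrilateral ABCD (vertices in cyclic order), with diagonal AC. *)
Record quad := Quad { qA : point; qB : point; qC : point; qD : point }.

(* The diagonal AC cuts the quadrilateral into the two (non-degenerate)
   triangles ABC and ACD: B and D lie strictly on opposite sides of line AC. *)
Definition diagonal_cuts (q : quad) : Prop :=
  cross (vsub (qC q) (qA q)) (vsub (qB q) (qA q)) *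
  cross (vsub (qC q) (qA q)) (vsub (qD q) (qA q)) < 0.

(* The four parameters: angles the diagonal AC makes with the four sides,
   i.e. the angles of triangles ABC and ACD at the endpoints A and C. *)
Definition param (q : quad) (i : nat) : R :=
  match i with
  | 0%nat => angle_at (qA q) (qB q) (qC q)
  | 1%nat => angle_at (qC q) (qA q) (qB q)
  | 2%nat => angle_at (qC q) (qA q) (qD q)
  | _ => angle_at (qA q) (qC q) (qD q)
  end.

Definition near_square (eps : R) (q : quad) : Prop :=
  forall i : nat, (i < 4)%nat -> Rabs (param q i - PI / 4) < eps.

Definition vertex (q : quad) (i : nat) : point :=
  match (i mod 4)%nat with
  | 0%nat => qA q
  | 1%nat => qB q
  | 2%nat => qC q
  | _ => qD q
  end.

Definition side (q : quad) (i : nat) : R := dist (vertex q i) (vertex q (S i)).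

(* In each of the two triangles cut off by the diagonal AC, the law of sines gives, for a
   side s_k of that triangle,  s_k sin(alpha + gamma) = |AC| sin beta_k,  where alpha and
   gamma are the triangle's angles at A and C (so sin(alpha + gamma) is the sine of its
   apex angle) and beta_k is the one of them opposite s_k.  Eliminating |AC| between two
   sides with s_i = 1 gives
     s_j sin beta_i sin(alpha_j + gamma_j) = sin beta_j sin(alpha_i + gamma_i).
   Every sin beta lies in [sin(pi/4 - eps), sin(pi/4 + eps)] and every apex sine in
   [cos(2 eps), 1]; as tan(pi/4 - eps) = sin(pi/4 - eps) / sin(pi/4 + eps), this is the
   claimed bound. *)

(* Stdlib first, so that [dist] below is Defs.dist and not the metric-space [dist] of Reals. *)
From Stdlib Require Import Reals Lra Lia.
From Pilot Require Import Defs.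
Open Scope R_scope.

Definition vangle (u v : point) : R := acos (dot u v / (vnorm u * vnorm v)).

Lemma angle_at_vangle (O X Y : point) : angle_at O X Y = vangle (vsub X O) (vsub Y O).
Proof. reflexivity. Qed.

Lemma cross_antisym (u v : point) : cross u v = - cross v u.
Proof. unfold cross; ring. Qed.

Lemma vnorm_sqr (u : point) : vnorm u * vnorm u = dot u u.
Proof. unfold vnorm, dot; apply sqrt_sqrt; nra. Qed.

Lemma vnorm_pos_of_cross (u v : point) : cross u v <> 0 -> 0 < vnorm u.
Proof.
  destruct u as [a b], v as [c d]; unfold vnorm, cross, dot; simpl; intro Hc.
  apply sqrt_lt_R0.
  destruct (Req_dec a 0), (Req_dec b 0); subst; nra.
Qed.

Lemma dist_comm (P Q : point) : dist P Q = dist Q P.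
Proof. unfold dist, vnorm, dot, vsub; simpl; f_equal; ring. Qed.

Lemma angle_at_comm (O X Y : point) : angle_at O X Y = angle_at O Y X.
Proof.
  unfold angle_at; rewrite (Rmult_comm (vnorm (vsub X O))).
  unfold dot; do 3 f_equal; ring.
Qed.

Lemma lagrange_identity (u v : point) :
  dot u v ^ 2 + cross u v ^ 2 = dot u u * dot v v.
Proof. unfold dot, cross; ring. Qed.

Section VectorAngle.

Variables u v : point.
Hypotheses (u_pos : 0 < vnorm u) (v_pos : 0 < vnorm v).

Lemma dot_div_vnorm_bound : -1 <= dot u v / (vnorm u * vnorm v) <= 1.
Proof.
  set (N := vnorm u * vnorm v).
  assert (HN : 0 < N) by (unfold N; nra).
  assert (Hsq : dot u v ^ 2 <= N ^ 2).
  { replace (N ^ 2) with (vnorm u * vnorm u * (vnorm v * vnorm v)) by (unfold N; ring).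
    rewrite !vnorm_sqr, <- lagrange_identity; nra. }
  assert (Hd : - N <= dot u v <= N) by (split; nra).
  unfold Rdiv; split; apply Rmult_le_reg_r with N; try lra;
    rewrite Rmult_assoc, Rinv_l, Rmult_1_r by lra; lra.
Qed.

Lemma cos_vangle : cos (vangle u v) * (vnorm u * vnorm v) = dot u v.
Proof.
  unfold vangle; rewrite cos_acos by exact dot_div_vnorm_bound.
  field; split; lra.
Qed.

Lemma sin_vangle : sin (vangle u v) * (vnorm u * vnorm v) = Rabs (cross u v).
Proof.
  unfold vangle; rewrite sin_acos by exact dot_div_vnorm_bound.
  set (N := vnorm u * vnorm v).
  assert (HN : 0 < N) by (unfold N; nra).
  replace (1 - (dot u v / N)²) with ((cross u v / N)²).
  - rewrite sqrt_Rsqr_abs; unfold Rdiv; rewrite Rabs_mult, Rabs_inv, (Rabs_pos_eq N) by lra.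
    field; lra.
  - assert (HN2 : N * N = dot u u * dot v v)
      by (unfold N; rewrite <- vnorm_sqr, <- (vnorm_sqr v); ring).
    unfold Rsqr; field_simplify_eq; [|lra].
    replace (N ^ 2) with (N * N) by ring.
    rewrite HN2, <- lagrange_identity; ring.
Qed.

End VectorAngle.

Section Triangle.

Variables P X Q : point.
Hypothesis nondegenerate : cross (vsub X P) (vsub Q P) <> 0.

Let area2 := Rabs (cross (vsub X P) (vsub Q P)).

Lemma cross_at_Q : cross (vsub P Q) (vsub X Q) = cross (vsub X P) (vsub Q P).
Proof. unfold cross, vsub; simpl; ring. Qed.

Lemma triangle_dist_pos : 0 < dist P X /\ 0 < dist P Q /\ 0 < dist X Q.
Proof.
  rewrite (dist_comm P X), (dist_comm P Q).
  split; [|split].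
  - exact (vnorm_pos_of_cross _ _ nondegenerate).
  - apply (vnorm_pos_of_cross _ (vsub X P)); rewrite cross_antisym; lra.
  - apply (vnorm_pos_of_cross _ (vsub P Q)); rewrite cross_antisym, cross_at_Q; lra.
Qed.

Lemma cos_angle_at_P :
  cos (angle_at P X Q) * (dist P X * dist P Q) = dot (vsub X P) (vsub Q P).
Proof.
  destruct triangle_dist_pos as (HPX & HPQ & _).
  rewrite (dist_comm P X), (dist_comm P Q) in *; exact (cos_vangle _ _ HPX HPQ).
Qed.

Lemma sin_angle_at_P : sin (angle_at P X Q) * (dist P X * dist P Q) = area2.
Proof.
  destruct triangle_dist_pos as (HPX & HPQ & _).
  rewrite (dist_comm P X), (dist_comm P Q) in *; exact (sin_vangle _ _ HPX HPQ).
Qed.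

Lemma cos_angle_at_Q :
  cos (angle_at Q P X) * (dist P Q * dist X Q) =
  dot (vsub Q P) (vsub Q P) - dot (vsub X P) (vsub Q P).
Proof.
  destruct triangle_dist_pos as (_ & HPQ & HXQ).
  rewrite angle_at_vangle; unfold dist; rewrite (cos_vangle _ _ HPQ HXQ).
  unfold dot, vsub; simpl; ring.
Qed.

Lemma sin_angle_at_Q : sin (angle_at Q P X) * (dist P Q * dist X Q) = area2.
Proof.
  destruct triangle_dist_pos as (_ & HPQ & HXQ).
  unfold area2; rewrite <- cross_at_Q; exact (sin_vangle _ _ HPQ HXQ).
Qed.

(* The base angles at P and Q sum to the supplement of the apex angle at X, so this is
   twice the area computed at X. *)
Lemma sin_base_angles_sum :
  sin (angle_at P X Q + angle_at Q P X) * (dist P X * dist X Q) = area2.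
Proof.
  destruct triangle_dist_pos as (_ & HPQ & _).
  apply Rmult_eq_reg_r with (dist P Q * dist P Q); [|nra].
  rewrite sin_plus.
  transitivity
    (sin (angle_at P X Q) * (dist P X * dist P Q) * (cos (angle_at Q P X) * (dist P Q * dist X Q)) +
     cos (angle_at P X Q) * (dist P X * dist P Q) * (sin (angle_at Q P X) * (dist P Q * dist X Q))).
  - ring.
  - rewrite sin_angle_at_P, cos_angle_at_Q, cos_angle_at_P, sin_angle_at_Q.
    rewrite (dist_comm P Q) at 1 2; unfold dist at 1 2; rewrite vnorm_sqr; ring.
Qed.

Lemma law_of_sines_PX :
  dist P X * sin (angle_at P X Q + angle_at Q P X) = dist P Q * sin (angle_at Q P X).
Proof.
  destruct triangle_dist_pos as (_ & _ & HXQ).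
  apply Rmult_eq_reg_r with (dist X Q); [|lra].
  transitivity (sin (angle_at P X Q + angle_at Q P X) * (dist P X * dist X Q)); [ring|].
  rewrite sin_base_angles_sum, <- sin_angle_at_Q; ring.
Qed.

Lemma law_of_sines_XQ :
  dist X Q * sin (angle_at P X Q + angle_at Q P X) = dist P Q * sin (angle_at P X Q).
Proof.
  destruct triangle_dist_pos as (HPX & _ & _).
  apply Rmult_eq_reg_r with (dist P X); [|lra].
  transitivity (sin (angle_at P X Q + angle_at Q P X) * (dist P X * dist X Q)); [ring|].
  rewrite sin_base_angles_sum, <- sin_angle_at_P; ring.
Qed.

End Triangle.

Lemma tan_quarter_pi_add (x : R) : tan (PI / 4 + x) = sin (PI / 4 + x) / sin (PI / 4 - x).
Proof.
  unfold tan; rewrite <- sin_shift.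
  replace (PI / 2 - (PI / 4 + x)) with (PI / 4 - x) by field; reflexivity.
Qed.

Lemma tan_quarter_pi_sub (x : R) : tan (PI / 4 - x) = sin (PI / 4 - x) / sin (PI / 4 + x).
Proof.
  unfold tan; rewrite <- sin_shift.
  replace (PI / 2 - (PI / 4 - x)) with (PI / 4 + x) by field; reflexivity.
Qed.

Lemma sin_near_quarter_pi (eps a : R) :
  eps < PI / 4 -> Rabs (a - PI / 4) < eps ->
  sin (PI / 4 - eps) <= sin a <= sin (PI / 4 + eps).
Proof.
  intros Heps Ha; pose proof PI_RGT_0; destruct (Rabs_def2 _ _ Ha).
  split; apply sin_incr_1; lra.
Qed.

Lemma cos_double_le_sin_sum (eps a b : R) :
  eps < PI / 4 -> Rabs (a - PI / 4) < eps -> Rabs (b - PI / 4) < eps ->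
  cos (2 * eps) <= sin (a + b).
Proof.
  intros Heps Ha Hb; pose proof PI_RGT_0.
  destruct (Rabs_def2 _ _ Ha), (Rabs_def2 _ _ Hb).
  rewrite <- cos_shift.
  destruct (Rle_dec 0 (PI / 2 - (a + b))).
  - apply cos_decr_1; lra.
  - rewrite <- (cos_neg (PI / 2 - (a + b))); apply cos_decr_1; lra.
Qed.

Lemma ratio_bounds (m M c a b s t L : R) :
  0 < m -> 0 < c -> m <= a <= M -> m <= b <= M -> c <= s <= 1 -> c <= t <= 1 ->
  L * b * t = a * s -> m / M * c <= L <= M / m / c.
Proof.
  intros Hm Hc Ha Hb Hs Ht E.
  assert (Hbt : m * c <= b * t <= M) by (split; nra).
  assert (Has : m * c <= a * s <= M) by (split; nra).
  assert (Hmc : 0 < m * c) by nra.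
  split.
  - apply Rmult_le_reg_r with (M * (b * t)); [nra|].
    replace (m / M * c * (M * (b * t))) with (m * c * (b * t)) by (field; lra).
    replace (L * (M * (b * t))) with (M * (a * s)) by (rewrite <- E; ring).
    nra.
  - apply Rmult_le_reg_r with (m * c * (b * t)); [nra|].
    replace (M / m / c * (m * c * (b * t))) with (M * (b * t)) by (field; lra).
    replace (L * (m * c * (b * t))) with (m * c * (a * s)) by (rewrite <- E; ring).
    nra.
Qed.

Definition base_angle_sum (q : quad) (k : nat) : R :=
  if (k mod 4 <? 2)%nat then param q 0 + param q 1 else param q 2 + param q 3.

Definition opposite_angle (q : quad) (k : nat) : R :=
  match (k mod 4)%nat with
  | 0%nat => param q 1
  | 1%nat => param q 0
  | 2%nat => param q 3
  | _ => param q 2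
  end.

Lemma side_mod4 (q : quad) (k : nat) : side q k = side q (k mod 4).
Proof.
  assert (Hsucc : (S (k mod 4) mod 4 = S k mod 4)%nat).
  { rewrite <- (Nat.add_1_l (k mod 4)), <- (Nat.add_1_l k).
    apply Nat.Div0.add_mod_idemp_r. }
  unfold side, vertex; rewrite Nat.Div0.mod_mod, Hsucc; reflexivity.
Qed.

Lemma diagonal_cuts_nondegenerate (q : quad) : diagonal_cuts q ->
  cross (vsub (qB q) (qA q)) (vsub (qC q) (qA q)) <> 0 /\
  cross (vsub (qD q) (qC q)) (vsub (qA q) (qC q)) <> 0.
Proof.
  unfold diagonal_cuts; intro Hcut.
  rewrite cross_antisym.
  replace (cross (vsub (qD q) (qC q)) (vsub (qA q) (qC q)))
    with (cross (vsub (qC q) (qA q)) (vsub (qD q) (qA q)))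
    by (unfold cross, vsub; simpl; ring).
  split; intro E; rewrite ?E in Hcut; nra.
Qed.

Lemma side_law_of_sines (q : quad) (k : nat) : diagonal_cuts q ->
  side q k * sin (base_angle_sum q k) = dist (qA q) (qC q) * sin (opposite_angle q k).
Proof.
  intro Hcut; destruct (diagonal_cuts_nondegenerate q Hcut) as [HABC HCDA].
  destruct q as [A B C D]; simpl in HABC, HCDA.
  rewrite side_mod4; unfold base_angle_sum, opposite_angle.
  pose proof (Nat.mod_upper_bound k 4 ltac:(lia)) as Hk.
  destruct (k mod 4) as [|[|[|[|r]]]]; [| | | |lia]; simpl.
  - exact (law_of_sines_PX A B C HABC).
  - exact (law_of_sines_XQ A B C HABC).
  - rewrite (dist_comm A C), <- (angle_at_comm C D A).
    exact (law_of_sines_PX C D A HCDA).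
  - rewrite (dist_comm A C), <- (angle_at_comm C D A).
    exact (law_of_sines_XQ C D A HCDA).
Qed.

Lemma opposite_angle_near (eps : R) (q : quad) (k : nat) :
  near_square eps q -> Rabs (opposite_angle q k - PI / 4) < eps.
Proof.
  intro Hns; unfold opposite_angle.
  destruct (k mod 4)%nat as [|[|[|[|r]]]]; apply Hns; lia.
Qed.

Lemma sin_base_angle_sum_bounds (eps : R) (q : quad) (k : nat) :
  eps < PI / 4 -> near_square eps q -> cos (2 * eps) <= sin (base_angle_sum q k) <= 1.
Proof.
  intros Heps Hns; split; [|apply SIN_bound].
  unfold base_angle_sum; destruct (k mod 4 <? 2)%nat;
    apply cos_double_le_sin_sum; try apply Hns; lia || lra.
Qed.

Lemma side_ratio_bounds (eps : R) (q : quad) (i j : nat) :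
  0 < eps -> eps < PI / 4 -> diagonal_cuts q -> near_square eps q -> side q i = 1 ->
  tan (PI / 4 - eps) * cos (2 * eps) <= side q j <= tan (PI / 4 + eps) / cos (2 * eps).
Proof.
  intros Heps Heps4 Hcut Hns Hi; pose proof PI_RGT_0.
  rewrite tan_quarter_pi_sub, tan_quarter_pi_add.
  apply (ratio_bounds _ _ _ (sin (opposite_angle q j)) (sin (opposite_angle q i))
           (sin (base_angle_sum q i)) (sin (base_angle_sum q j))).
  - apply sin_gt_0; lra.
  - apply cos_gt_0; lra.
  - exact (sin_near_quarter_pi _ _ Heps4 (opposite_angle_near eps q j Hns)).
  - exact (sin_near_quarter_pi _ _ Heps4 (opposite_angle_near eps q i Hns)).
  - exact (sin_base_angle_sum_bounds eps q i Heps4 Hns).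
  - exact (sin_base_angle_sum_bounds eps q j Heps4 Hns).
  - pose proof (side_law_of_sines q i Hcut) as Li.
    pose proof (side_law_of_sines q j Hcut) as Lj.
    rewrite Hi, Rmult_1_l in Li; rewrite Li.
    transitivity (side q j * sin (base_angle_sum q j) * sin (opposite_angle q i)); [ring|].
    rewrite Lj; ring.
Qed.

Theorem lemma3p4p4 (eps : R) (q : quad) :
  0 < eps -> eps < PI / 4 ->
  diagonal_cuts q -> near_square eps q ->
  forall i : nat, side q i = 1 ->
  forall L : R, (L = side q (S i) \/ L = side q (i + 3)) ->
    tan (PI / 4 - eps) * cos (2 * eps) <= L /\
    L <= tan (PI / 4 + eps) / cos (2 * eps).
Proof.
  intros Heps Heps4 Hcut Hns i Hi L HL.
  destruct HL as [-> | ->]; exact (side_ratio_bounds eps q i _ Heps Heps4 Hcut Hns Hi).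
Qed.
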